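(* Let $M\ge K$, let $\mathbf h_1,\dots,\mathbf h_K\in\mathbb C^{1\times M}$ be linearly independent, and let $\mu_1\ge\mu_2\ge\dots\ge\mu_K\ge0$ with $\sum_k\mu_k=1$. For powers $P_1,\dots,P_K\ge0$ let $\mathbf A^{(0)}=\mathbf I_M$ and $\mathbf A^{(k-1)}=\mathbf I_M+\sum_{j=1}^{k-1}P_j\mathbf h_j^H\mathbf h_j$, and define $R(P_1,\dots,P_K)=\sum_{k=1}^K\mu_k\log_2\left(1+P_k\mathbf h_k(\mathbf A^{(k-1)})^{-1}\mathbf h_k^H\right)$ and $$\mathcal C_{\mathrm{DPC}}(\boldsymbol\mu,\mathbf H,P)=\max_{P_k\ge0,\ \sum_kP_k\le P}R(P_1,\dots,P_K).$$ Then the allocation $P_k=\mu_kP$, $k=1,\dots,K$, is asymptotically optimal at high SNR: $$\lim_{P\to\infty}\left[\mathcal C_{\mathrm{DPC}}(\boldsymbol\mu,\mathbf H,P)-R(\mu_1P,\dots,\mu_KP)\right]=0.$$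
   Context: $\mathcal C_{\mathrm{DPC}}(\boldsymbol\mu,\mathbf H,P)$ is the maximum weighted sum rate $\sum_k\mu_kR_k$ over the dirty-paper-coding capacity region of the MIMO broadcast channel with $M$ transmit antennas and $K$ single-antenna users with channel row vectors $\mathbf h_k$, unit noise and total power $P$, written via the dual multiple-access channel with user $k$ decoded in the presence of users $1,\dots,k-1$. *)

From HB Require Import structures.
From mathcomp Require Import all_boot all_order all_algebra.
From mathcomp Require Import all_classical all_reals all_analysis.
From mathcomp Require Import complex.
Set Implicit Arguments. Unset Strict Implicit. Unset Printing Implicit Defensive.
Import Order.TTheory GRing.Theory Num.Theory.
Local Open Scope ring_scope.

Definition log2 (R : realType) (x : R) : R := ln x / ln 2.

Definition adjmx (R : rcfType) (m n : nat) (A : 'M[R[i]]_(m, n)) : 'M[R[i]]_(n, m) :=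
  (map_mx (@conjc R) A)^T.

(* A^(k-1) = I_M + sum_{j < k} P_j h_j^H h_j ; H has rows h_1..h_K, indices 0-based *)
Definition Amat (R : rcfType) (K M : nat) (H : 'M[R[i]]_(K, M)) (P : 'I_K -> R)
  (k : 'I_K) : 'M[R[i]]_M :=
  1%:M + \sum_(j < K | (j < k)%N) real_complex R (P j) *: (adjmx (row j H) *m row j H).

(* R(P_1..P_K) = sum_k mu_k log2(1 + P_k h_k (A^(k-1))^{-1} h_k^H).
   The quadratic form is real (A Hermitian positive definite); we take its real part. *)
Definition rate (R : realType) (K M : nat) (mu : 'I_K -> R) (H : 'M[R[i]]_(K, M))
  (P : 'I_K -> R) : R :=
  \sum_(k < K) mu k *
    log2 (1 + P k * complex.Re ((row k H *m invmx (Amat H P k) *m adjmx (row k H)) 0 0)).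

(* C_DPC(mu, H, P) = max over P_k >= 0, sum P_k <= P of rate; written as sup
   (the max is attained, the feasible set being compact and rate continuous). *)
Definition C_DPC (R : realType) (K M : nat) (mu : 'I_K -> R) (H : 'M[R[i]]_(K, M))
  (Ptot : R) : R :=
  sup [set r | exists P : 'I_K -> R,
         [/\ (forall k, 0 <= P k), \sum_(k < K) P k <= Ptot & r = rate mu H P]].

From HB Require Import structures.
From mathcomp Require Import all_boot all_order all_algebra.
From mathcomp Require Import all_classical all_reals all_analysis.
From mathcomp Require Import complex.
From mathcomp Require Import ring lra.
Set Implicit Arguments. Unset Strict Implicit. Unset Printing Implicit Defensive.
Import Order.TTheory GRing.Theory Num.Theory.
Local Open Scope ring_scope.
Local Open Scope complex_scope.

(* Let A_k = I + sum_(j < k) P_j h_j^H h_j.  The matrix determinant lemma gives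
   det A_(k+1) = det A_k (1 + P_k h_k A_k^-1 h_k^H), so R(P) ln 2 is the weighted
   sum of the increments ln det A_(k+1) - ln det A_k.  If (r_j) is the dual basis
   of (h_j), then h_j Y^-1 h_j^H >= 1 / |r_j|^2 for every Gram matrix Y built
   from the other h_i; moving the powers one user at a time from Q_j = mu_j P to
   an arbitrary feasible P'_j therefore changes ln det A_n by at most
   sum_(j < n) (P'_j - Q_j + |r_j|^2) / Q_j.  Abel summation against the
   nonincreasing weights mu_k turns this into
   R(P') - R(mu P) <= sum_j |r_j|^2 / (P ln 2), which squeezes the gap
   C_DPC - R(mu P) to 0. *)

Lemma det1Dmulmx (F : comRingType) (n : nat) (u : 'cV[F]_n) (v : 'rV[F]_n) :
  \det (1%:M + u *m v) = 1 + (v *m u) 0 0.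
Proof.
have e : block_mx (1%:M + u *m v) (- u) 0 1%:M *m block_mx 1%:M 0 v 1%:M
       = block_mx 1%:M 0 v 1%:M *m block_mx 1%:M (- u) 0 (1%:M + v *m u).
  rewrite !mulmx_block !mulmx1 !mul1mx !mulmx0 !mul0mx !addr0 !add0r.
  by rewrite mulNmx addrK mulmxN addrC addrK.
move/(congr1 determinant): e.
rewrite !det_mulmx !det_ublock !det_lblock !det1 !mulr1 !mul1r => ->.
by rewrite det_mx11 !mxE.
Qed.

Section Adjoint.
Variable R : rcfType.

Lemma adjmxK m n (A : 'M[R[i]]_(m, n)) : adjmx (adjmx A) = A.
Proof. by apply/matrixP => i j; rewrite /adjmx !mxE conjcK. Qed.

Lemma adjmxM m n p (A : 'M[R[i]]_(m, n)) (B : 'M[R[i]]_(n, p)) :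
  adjmx (A *m B) = adjmx B *m adjmx A.
Proof. by rewrite /adjmx map_mxM trmx_mul. Qed.

Lemma adjmxD m n (A B : 'M[R[i]]_(m, n)) : adjmx (A + B) = adjmx A + adjmx B.
Proof. by apply/matrixP => i j; rewrite /adjmx !mxE rmorphD. Qed.

Lemma adjmxN m n (A : 'M[R[i]]_(m, n)) : adjmx (- A) = - adjmx A.
Proof. by apply/matrixP => i j; rewrite /adjmx !mxE rmorphN. Qed.

Lemma adjmxB m n (A B : 'M[R[i]]_(m, n)) : adjmx (A - B) = adjmx A - adjmx B.
Proof. by rewrite adjmxD adjmxN. Qed.

Lemma adjmx0 m n : adjmx (0 : 'M[R[i]]_(m, n)) = 0.
Proof. by apply/matrixP => i j; rewrite /adjmx !mxE conjc0. Qed.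

Lemma adjmxZ m n c (A : 'M[R[i]]_(m, n)) : adjmx (c *: A) = conjc c *: adjmx A.
Proof. by apply/matrixP => i j; rewrite /adjmx !mxE rmorphM. Qed.

Lemma adjmx_scalar n (c : R[i]) : adjmx (c%:M : 'M[R[i]]_n) = (conjc c)%:M.
Proof.
by apply/matrixP => i j; rewrite /adjmx !mxE eq_sym; case: eqP; rewrite ?conjc0.
Qed.

Lemma adjmx_sum m n (I : finType) (S : pred I) (F : I -> 'M[R[i]]_(m, n)) :
  adjmx (\sum_(i | S i) F i) = \sum_(i | S i) adjmx (F i).
Proof. exact: (big_morph _ (@adjmxD m n) (@adjmx0 m n)). Qed.

Lemma adjmx_inv n (A : 'M[R[i]]_n) : adjmx (invmx A) = invmx (adjmx A).
Proof. by rewrite /adjmx map_invmx trmx_inv. Qed.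

Definition sqnorm n (x : 'rV[R[i]]_n) : R[i] := (x *m adjmx x) 0 0.

Definition qform n (x : 'rV[R[i]]_n) (A : 'M[R[i]]_n) : R[i] := (x *m A *m adjmx x) 0 0.

Lemma sqnorm_ge0 n (x : 'rV[R[i]]_n) : 0 <= sqnorm x.
Proof. by rewrite /sqnorm !mxE; apply: sumr_ge0 => j _; rewrite /adjmx !mxE mulcJ_ge0. Qed.

Lemma sqnorm_eq0 n (x : 'rV[R[i]]_n) : (sqnorm x == 0) = (x == 0).
Proof.
rewrite /sqnorm !mxE psumr_eq0 => [|j _]; last by rewrite /adjmx !mxE mulcJ_ge0.
apply/allP/eqP => [x0|-> j _].
  apply/rowP => j; have := x0 j (mem_index_enum j).
  by rewrite /adjmx !mxE implyTb mulf_eq0 conjc_eq0 orbb => /eqP.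
by rewrite /adjmx !mxE mul0r implyTb.
Qed.

Lemma lec_Re (x y : R[i]) : x <= y -> complex.Re x <= complex.Re y.
Proof. by rewrite lecE => /andP[]. Qed.

Lemma Re_sqnorm_ge0 n (x : 'rV[R[i]]_n) : 0 <= complex.Re (sqnorm x).
Proof. exact: lec_Re (sqnorm_ge0 x). Qed.

Lemma ger0_ReK (x : R[i]) : 0 <= x -> (complex.Re x)%:C = x.
Proof. by move=> x0; rewrite RRe_real // ger0_real. Qed.

Lemma det_rank1_update n (Y : 'M[R[i]]_n) (c : R[i]) (h : 'rV[R[i]]_n) :
  Y \in unitmx -> \det (Y + c *: (adjmx h *m h)) = \det Y * (1 + c * qform h (invmx Y)).
Proof.
move=> Yu; have -> : Y + c *: (adjmx h *m h) = Y *m (1%:M + (invmx Y *m (c *: adjmx h)) *m h).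
  by rewrite mulmxDr mulmx1 !mulmxA mulmxV // mul1mx scalemxAl.
by rewrite det_mulmx det1Dmulmx -!scalemxAr mulmxA mxE.
Qed.

End Adjoint.

Section Gram.
Variables (R : rcfType) (K M : nat) (H : 'M[R[i]]_(K, M)).
Local Notation h j := (row j H).

Definition gram (P : 'I_K -> R) (S : pred 'I_K) : 'M[R[i]]_M :=
  1%:M + \sum_(j | S j) (P j)%:C *: (adjmx (h j) *m h j).

Lemma eq_gram P P' (S S' : pred 'I_K) :
  S =1 S' -> {in S, P =1 P'} -> gram P S = gram P' S'.
Proof.
move=> eS eP; rewrite /gram (eq_bigl _ _ eS); congr (_ + _).
by apply: eq_bigr => j Sj; rewrite eP // unfold_in eS.
Qed.

Lemma gramD1 P (S : pred 'I_K) m : S m ->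
  gram P S = gram P (predD1 S m) + (P m)%:C *: (adjmx (h m) *m h m).
Proof.
move=> Sm; rewrite /gram (bigD1 m) //= [_ + \sum_(i | _) _]addrC addrA.
by congr (_ + _ + _); apply: eq_bigl => j; rewrite andbC.
Qed.

Lemma adjmx_gram P (S : pred 'I_K) : adjmx (gram P S) = gram P S.
Proof.
rewrite /gram adjmxD adjmx_scalar conjc1 adjmx_sum; congr (_ + _).
by apply: eq_bigr => j _; rewrite adjmxZ conjc_real adjmxM adjmxK.
Qed.

Lemma qform_gram P (S : pred 'I_K) (x : 'rV[R[i]]_M) :
  qform x (gram P S) = sqnorm x + \sum_(j | S j) (P j)%:C * sqnorm (x *m adjmx (h j)).
Proof.
rewrite /qform /sqnorm /gram mulmxDr mulmx1 mulmxDl mxE; congr (_ + _).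
rewrite mulmx_sumr mulmx_suml summxE; apply: eq_bigr => j _.
by rewrite -scalemxAr -scalemxAl mxE adjmxM adjmxK !mulmxA.
Qed.

Section NonnegativePowers.
Variable P : 'I_K -> R.
Hypothesis P_ge0 : forall j, 0 <= P j.

Lemma sqnorm_le_qform_gram (S : pred 'I_K) (x : 'rV[R[i]]_M) : sqnorm x <= qform x (gram P S).
Proof.
rewrite qform_gram lerDl; apply: sumr_ge0 => j _.
by rewrite mulr_ge0 ?sqnorm_ge0 // ler0c.
Qed.

Lemma gram_unit (S : pred 'I_K) : gram P S \in unitmx.
Proof.
rewrite -row_free_unit -kermx_eq0; apply/eqP/row_matrixP => i; rewrite row0.
have /sub_kermxP xG0 := row_sub i (kermx (gram P S)).
apply/eqP; rewrite -sqnorm_eq0 eq_le sqnorm_ge0 andbT.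
by have := sqnorm_le_qform_gram S (row i (kermx (gram P S))); rewrite /qform xG0 mul0mx mxE.
Qed.

Lemma qform_invgram_ge0 (S : pred 'I_K) (x : 'rV[R[i]]_M) : 0 <= qform x (invmx (gram P S)).
Proof.
set z := x *m invmx (gram P S).
have -> : qform x (invmx (gram P S)) = qform z (gram P S).
  by rewrite /qform /z adjmxM adjmx_inv adjmx_gram !mulmxA mulmxKV ?gram_unit.
exact: le_trans (sqnorm_ge0 z) (sqnorm_le_qform_gram S z).
Qed.

(* Cauchy-Schwarz for the form of [gram P S]: expand [qform (e z - r) (gram P S) >= 0]
   with [z = x *m invmx (gram P S)] and [e = sqnorm r]. *)
Lemma qform_invgram_ge (S : pred 'I_K) (r x : 'rV[R[i]]_M) :
  (forall j, S j -> r *m adjmx (h j) = 0) -> r *m adjmx x = 1%:M ->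
  1 <= sqnorm r * qform x (invmx (gram P S)).
Proof.
move=> rh0 rx1; set Y := gram P S; have Yu : Y \in unitmx := gram_unit S.
have rY : r *m Y = r.
  rewrite /Y /gram mulmxDr mulmx1 mulmx_sumr big1 ?addr0 // => j Sj.
  by rewrite -scalemxAr mulmxA rh0 // mul0mx scaler0.
have rYi : r *m invmx Y = r by rewrite -{1}rY mulmxK.
have xr1 : x *m adjmx r = 1%:M by rewrite -[x]adjmxK -adjmxM rx1 adjmx_scalar conjc1.
set e := sqnorm r; set t := qform x (invmx Y).
have e_gt0 : 0 < e.
  rewrite lt_def sqnorm_ge0 sqnorm_eq0 andbT; apply: contra_eq_neq rx1 => ->.
  rewrite mul0mx; apply/eqP/matrixP => /(_ 0 0).
  by rewrite !mxE eqxx => /esym/eqP; rewrite oner_eq0.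
have ec : conjc e = e by rewrite -(ger0_ReK (ltW e_gt0)) conjc_real.
set z := x *m invmx Y; set w := e *: z - r.
have := le_trans (sqnorm_ge0 w) (sqnorm_le_qform_gram S w).
have wY : w *m Y = e *: x - r by rewrite mulmxBl -scalemxAl mulmxKV // rY.
have az : adjmx z = invmx Y *m adjmx x by rewrite adjmxM adjmx_inv adjmx_gram.
rewrite /qform wY adjmxB adjmxZ ec az mulmxBr !mulmxBl -!scalemxAl -!scalemxAr !mulmxA.
rewrite rYi rx1 xr1 [x *m _ *m _]mx11_scalar [r *m _]mx11_scalar -/(qform x _) -/(sqnorm r).
rewrite -/e -/t !mxE !mulr1n.
by rewrite mulr1 subrr subr0 -[X in _ - X]mulr1 -mulrBr pmulr_rge0 // subr_ge0.
Qed.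

Lemma det_gramD1 (S : pred 'I_K) m : S m ->
  \det (gram P S) = \det (gram P (predD1 S m)) *
                    (1 + (P m)%:C * qform (h m) (invmx (gram P (predD1 S m)))).
Proof. by move=> Sm; rewrite (gramD1 P Sm) det_rank1_update ?gram_unit. Qed.

Lemma det_gram_ge1 (S : pred 'I_K) : 1 <= \det (gram P S).
Proof.
suff /(_ K) : forall n, 1 <= \det (gram P [pred j | S j && (j < n)%N]).
  by rewrite (@eq_gram P P _ S) // => j; rewrite /= ltn_ord andbT.
elim=> [|n IHn].
  by rewrite /gram big_pred0 ?addr0 ?det1 // => j; rewrite /= ltn0 andbF.
have Sn1E j : (S j && (j < n.+1)%N) = (S j && (j < n)%N) || (S j && (val j == n)).
  by rewrite ltnS leq_eqVlt orbC andb_orr.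
have [m /andP [/eqP mn Sm] | noS] := pickP [pred m : 'I_K | (val m == n) && S m].
  rewrite (@det_gramD1 _ m) /=; last by rewrite Sm mn ltnSn.
  rewrite (@eq_gram P P _ [pred j | S j && (j < n)%N]) //; last first.
    move=> j /=; rewrite Sn1E -mn (inj_eq val_inj).
    by case: (eqVneq j m) => [->|]; rewrite ?ltnn ?andbF ?orbF.
  by apply: mulr_ege1 IHn _; rewrite lerDl mulr_ge0 ?qform_invgram_ge0 // ler0c.
rewrite (@eq_gram P P _ [pred j | S j && (j < n)%N]) // => j /=.
by move: (noS j) => /=; rewrite Sn1E; case: (S j) => //=; rewrite andbT => ->; rewrite orbF.
Qed.

End NonnegativePowers.
End Gram.

Lemma big_ord_ltS (V : zmodType) (K : nat) (F : 'I_K -> V) (k : 'I_K) :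
  \sum_(j < K | (j < k.+1)%N) F j = \sum_(j < K | (j < k)%N) F j + F k.
Proof.
rewrite (bigD1 k) //= addrC; congr (_ + _); apply: eq_bigl => j.
by rewrite ltnS ltn_neqAle andbC.
Qed.

Lemma ln_ratio_le (R : realType) (p q e t : R) :
  0 <= p -> 0 < q -> 0 <= e -> 1 <= e * t ->
  ln (1 + p * t) - ln (1 + q * t) <= (p - q + e) / q.
Proof.
move=> p_ge0 q_gt0 e_ge0 et_ge1.
have t_gt0 : 0 < t.
  rewrite ltNge; apply: contraTN et_ge1 => t_le0.
  by rewrite -ltNge (le_lt_trans (mulr_ge0_le0 e_ge0 t_le0)) ?ltr01.
have qt_gt0 : 0 < 1 + q * t := ltr_wpDr (mulr_ge0 (ltW q_gt0) (ltW t_gt0)) ltr01.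
have pt_gt0 : 0 < 1 + p * t := ltr_wpDr (mulr_ge0 p_ge0 (ltW t_gt0)) ltr01.
rewrite -(ln_div pt_gt0 qt_gt0).
have ratioE : (1 + p * t) / (1 + q * t) = 1 + (p - q) * t / (1 + q * t).
  by field; rewrite gt_eqF.
have : 0 < (1 + p * t) / (1 + q * t) by rewrite divr_gt0.
rewrite ratioE => ratio_gt0.
have x_gtN1 : -1 < (p - q) * t / (1 + q * t) by lra.
apply: le_trans (le_ln1Dx x_gtN1) _.
rewrite ler_pdivrMr // mulrAC ler_pdivlMr //; nra.
Qed.

Lemma sum_weighted_increments_le0 (R : realDomainType) (K : nat)
    (mu : 'I_K -> R) (c : nat -> R) :
  c 0%N = 0 -> (forall k, 0 <= mu k) -> (forall i j : 'I_K, (i <= j)%N -> mu j <= mu i) ->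
  (forall k : 'I_K, 0 < mu k -> c k.+1 <= 0) ->
  \sum_(k < K) mu k * (c k.+1 - c k) <= 0.
Proof.
case: K mu => [|K] mu c0 mu_ge0 mu_noninc c_le0; first by rewrite big_ord0.
pose nu n := mu (inord n).
suff /(_ K (leqnn K)) : forall n, (n <= K)%N ->
    \sum_(k < n.+1) nu k * (c k.+1 - c k) <= nu n * c n.+1.
  move=> sum_le; rewrite (eq_bigr (fun k : 'I_K.+1 => nu k * (c k.+1 - c k))); last first.
    by move=> k _; rewrite /nu inord_val.
  apply: le_trans sum_le _; rewrite /nu; have [mu_gt0|mu_le0] := ltP 0 (mu (inord K)).
    by apply: mulr_ge0_le0 (ltW mu_gt0) _; have := c_le0 _ mu_gt0; rewrite inordK.
  have -> : mu (inord K) = 0 by apply/le_anti; rewrite mu_le0 mu_ge0.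
  by rewrite mul0r.
elim=> [_|n IHn n_lt]; first by rewrite big_ord1 c0 subr0.
rewrite big_ord_recr /=; apply: le_trans (lerD (IHn (ltnW n_lt)) (lexx _)) _.
have nu_noninc : nu n.+1 <= nu n.
  by apply: mu_noninc; rewrite !inordK // ltnS // ltnW.
have step : (nu n - nu n.+1) * c n.+1 <= 0.
  have [nu_gt0|nu_le0] := ltP 0 (nu n).
    apply: mulr_ge0_le0; first by rewrite subr_ge0.
    by have := c_le0 _ nu_gt0; rewrite inordK // ltnS ltnW.
  have nu0 : nu n = 0 by apply/le_anti; rewrite nu_le0 /nu mu_ge0.
  have nu1 : nu n.+1 = 0 by apply/le_anti; rewrite -{1}nu0 nu_noninc /nu mu_ge0.
  by rewrite nu0 nu1 subrr mul0r.
have -> : nu n * c n.+1 + nu n.+1 * (c n.+2 - c n.+1) =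
          nu n.+1 * c n.+2 + (nu n - nu n.+1) * c n.+1 by ring.
by rewrite gerDl.
Qed.

Section LogDet.
Variables (R : realType) (K M : nat) (H : 'M[R[i]]_(K, M)).
Local Notation h j := (row j H).

Definition ldet (P : 'I_K -> R) (n : nat) : R :=
  ln (complex.Re (\det (gram H P (fun j => (j < n)%N)))).

Definition patch (P Q : 'I_K -> R) (m : nat) (j : 'I_K) : R :=
  if (j < m)%N then P j else Q j.

Lemma eq_ldet P Q n : (forall j : 'I_K, (j < n)%N -> P j = Q j) -> ldet P n = ldet Q n.
Proof. by move=> PQ; rewrite /ldet (@eq_gram _ _ _ H P Q _ _ (fun=> erefl)). Qed.

Lemma ldet0 P : ldet P 0 = 0.
Proof. by rewrite /ldet /gram big_pred0 ?addr0 ?det1 ?ln1. Qed.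

Section NonnegativePowers.
Variable P : 'I_K -> R.
Hypothesis P_ge0 : forall j, 0 <= P j.

Lemma Re_det_gram_ge1 (S : pred 'I_K) : 1 <= complex.Re (\det (gram H P S)).
Proof. exact: lec_Re (det_gram_ge1 H P_ge0 S). Qed.

Lemma Re_det_gramD1 (S : pred 'I_K) m : S m ->
  complex.Re (\det (gram H P S)) =
  complex.Re (\det (gram H P (predD1 S m))) *
  (1 + P m * complex.Re (qform (h m) (invmx (gram H P (predD1 S m))))).
Proof.
move=> Sm; rewrite (det_gramD1 H P_ge0 Sm).
rewrite -(ger0_ReK (le_trans ler01 (det_gram_ge1 H P_ge0 _))).
rewrite -(ger0_ReK (qform_invgram_ge0 H P_ge0 _ _)).
by rewrite -[1]/(1%:C) -rmorphM -rmorphD -rmorphM.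
Qed.

Lemma ldet_succ (k : 'I_K) :
  ln (1 + P k * complex.Re (qform (h k) (invmx (Amat H P k)))) = ldet P k.+1 - ldet P k.
Proof.
have D1E : predD1 (fun j : 'I_K => (j < k.+1)%N) k =1 (fun j : 'I_K => (j < k)%N).
  by move=> j; rewrite /= ltnS ltn_neqAle.
rewrite /ldet (Re_det_gramD1 (ltnSn k)) (eq_gram _ D1E (fun _ _ => erefl)).
have q_ge0 := lec_Re (qform_invgram_ge0 H P_ge0 (fun j : 'I_K => (j < k)%N) (h k)).
have d_gt0 := lt_le_trans ltr01 (Re_det_gram_ge1 (fun j : 'I_K => (j < k)%N)).
have Pq_ge0 : 0 <= P k * complex.Re (qform (h k) (invmx (Amat H P k))).
  exact: mulr_ge0.
rewrite lnM ?posrE //; first by rewrite addrAC subrr add0r.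
exact: ltr_wpDr.
Qed.

End NonnegativePowers.

Lemma rate_ldet (mu P : 'I_K -> R) : (forall j, 0 <= P j) ->
  rate mu H P = (\sum_(k < K) mu k * (ldet P k.+1 - ldet P k)) / ln 2.
Proof.
move=> P_ge0; rewrite /rate /log2 mulr_suml; apply: eq_bigr => k _.
by rewrite -ldet_succ // mulrA.
Qed.

Section DualFamily.
Variable r : 'I_K -> 'rV[R[i]]_M.
Hypothesis r_dual : forall m j, r m *m adjmx (h j) = (j == m)%:R%:M.
Local Notation e j := (complex.Re (sqnorm (r j))).

Lemma ldet_patch_succ_le P Q n (m : 'I_K) :
  (forall j, 0 <= P j) -> (forall j, 0 <= Q j) -> 0 < Q m -> (m < n)%N ->
  ldet (patch P Q m.+1) n - ldet (patch P Q m) n <= (P m - Q m + e m) / Q m.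
Proof.
move=> P_ge0 Q_ge0 Qm_gt0 mn.
have patch_ge0 k j : 0 <= patch P Q k j by rewrite /patch; case: ifP.
set S := fun j : 'I_K => (j < n)%N; have Sm : S m := mn.
rewrite /ldet !(Re_det_gramD1 (patch_ge0 _) Sm).
have patchE : {in predD1 S m, patch P Q m.+1 =1 patch P Q m}.
  by move=> j /andP[jm _]; rewrite /patch ltnS leq_eqVlt (inj_eq val_inj) (negbTE jm).
rewrite (eq_gram _ (fun=> erefl) patchE) /patch ltnSn ltnn -/(patch P Q m).
set D := complex.Re _; set t := complex.Re _.
have D_gt0 : 0 < D := lt_le_trans ltr01 (Re_det_gram_ge1 (patch_ge0 m) _).
have t_ge0 : 0 <= t := lec_Re (qform_invgram_ge0 H (patch_ge0 m) (predD1 S m) (h m)).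
have et_ge1 : 1 <= e m * t.
  have r_orth j : predD1 S m j -> r m *m adjmx (h j) = 0.
    by case/andP=> jm _; rewrite r_dual (negbTE jm) mulr0n raddf0.
  have r_one : r m *m adjmx (h m) = 1%:M by rewrite r_dual eqxx.
  have := qform_invgram_ge (patch_ge0 m) r_orth r_one.
  rewrite -[sqnorm _](ger0_ReK (sqnorm_ge0 _)).
  rewrite -[qform _ _](ger0_ReK (qform_invgram_ge0 _ (patch_ge0 m) _ _)).
  by rewrite -rmorphM -[1]/(1%:C) lecR.
have lnD1 (p : R) : 0 <= p -> ln (D * (1 + p * t)) = ln D + ln (1 + p * t).
  by move=> p_ge0; rewrite lnM ?posrE // (ltr_wpDr (mulr_ge0 p_ge0 t_ge0) ltr01).
rewrite !lnD1 ?(ltW Qm_gt0) // opprD addrACA subrr add0r.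
exact: ln_ratio_le (Re_sqnorm_ge0 _) et_ge1.
Qed.

Lemma ldet_sub_le P Q n :
  (forall j, 0 <= P j) -> (forall j, 0 <= Q j) -> (n <= K)%N ->
  (forall j : 'I_K, (j < n)%N -> 0 < Q j) ->
  ldet P n - ldet Q n <= \sum_(j < K | (j < n)%N) (P j - Q j + e j) / Q j.
Proof.
move=> P_ge0 Q_ge0 nK Q_gt0.
suff /(_ n (leqnn n)) : forall m, (m <= n)%N ->
    ldet (patch P Q m) n - ldet Q n <= \sum_(j < K | (j < m)%N) (P j - Q j + e j) / Q j.
  by rewrite (@eq_ldet (patch P Q n) P) // => j jn; rewrite /patch jn.
elim=> [_|m IHm mn].
  by rewrite (@eq_ldet (patch P Q 0) Q) ?subrr ?big_pred0 // => j; rewrite /patch.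
have mK : (m < K)%N := leq_trans mn nK.
rewrite (big_ord_ltS _ (Ordinal mK)) [X in _ <= X]addrC.
rewrite -[ldet (patch P Q m.+1) n](subrK (ldet (patch P Q m) n)) -addrA.
exact: lerD (ldet_patch_succ_le P_ge0 Q_ge0 (Q_gt0 (Ordinal mK) mn) mn) (IHm (ltnW mn)).
Qed.

Lemma rate_sub_le (mu P' : 'I_K -> R) (P : R) :
  (forall k, 0 <= mu k) -> (forall i j : 'I_K, (i <= j)%N -> mu j <= mu i) ->
  \sum_(k < K) mu k = 1 ->
  0 < P -> (forall k, 0 <= P' k) -> \sum_(k < K) P' k <= P ->
  rate mu H P' - rate mu H (fun k => mu k * P) <= (\sum_(j < K) e j) / P / ln 2.
Proof.
move=> mu_ge0 mu_noninc mu_sum1 P_gt0 P'_ge0 P'_sum.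
set Q := fun k => mu k * P.
have Q_ge0 k : 0 <= Q k := mulr_ge0 (mu_ge0 k) (ltW P_gt0).
pose f j := (P' j - Q j + e j) / Q j.
have incr_le : \sum_(k < K) mu k * ((ldet P' k.+1 - ldet P' k) - (ldet Q k.+1 - ldet Q k))
               <= \sum_(k < K) mu k * f k.
  rewrite -subr_le0 -sumrB.
  pose c n := ldet P' n - ldet Q n - \sum_(j < K | (j < n)%N) f j.
  rewrite (eq_bigr (fun k : 'I_K => mu k * (c k.+1 - c k))) => [|k _]; last first.
    rewrite /c big_ord_ltS -mulrBr; congr (_ * _).
    (* Generalizing the atoms keeps [ring] from unfolding [ldet]. *)
    by move: (ldet _ _) (ldet _ _) (ldet _ _) (ldet _ _) (\sum_(j < K | _) _) (f k) => *; ring.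
  apply: sum_weighted_increments_le0 => // [|k mu_gt0].
    by rewrite /c !ldet0 big_pred0 ?subr0.
  rewrite /c subr_le0; apply: ldet_sub_le => // j jk.
  by rewrite /Q mulr_gt0 // (lt_le_trans mu_gt0) // mu_noninc // -ltnS.
have term_le k : mu k * f k <= (P' k - Q k + e k) / P.
  have [mu0|mu_neq0] := eqVneq (mu k) 0.
    rewrite /Q mu0 !mul0r subr0.
    exact: divr_ge0 (addr_ge0 (P'_ge0 k) (Re_sqnorm_ge0 _)) (ltW P_gt0).
  suff -> : mu k * f k = (P' k - Q k + e k) / P by [].
  by rewrite /f /Q; field; rewrite mu_neq0 gt_eqF.
have ln2_gt0 : 0 < ln (2 : R) by rewrite ln_gt0 // ltr1n.
rewrite !rate_ldet // -mulrBl ler_pM2r ?invr_gt0 // -sumrB.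
under eq_bigr do rewrite -mulrBr.
apply: le_trans incr_le (le_trans (ler_sum _ (fun k _ => term_le k)) _).
rewrite -mulr_suml !big_split /= sumrN -mulr_suml mu_sum1 mul1r.
by rewrite ler_pM2r ?invr_gt0 // gerDr subr_le0.
Qed.

End DualFamily.
End LogDet.

Lemma row_free_dual (R : rcfType) (K M : nat) (H : 'M[R[i]]_(K, M)) :
  row_free H -> exists r : 'I_K -> 'rV[R[i]]_M,
    forall m j, r m *m adjmx (row j H) = (j == m)%:R%:M.
Proof.
move=> /row_freeP[B HB]; exists (fun m => adjmx (col m B)) => m j.
have HBjm : row j H *m col m B = (j == m)%:R%:M.
  apply/rowP => a; rewrite ord1 !mxE mulr1n; move/matrixP: HB => /(_ j m).
  by rewrite !mxE => <-; apply: eq_bigr => k _; rewrite !mxE.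
by rewrite -adjmxM HBjm adjmx_scalar rmorph_nat.
Qed.

Local Open Scope classical_set_scope.

Lemma sup_sub_le (R : realType) (E : set R) (x b : R) :
  E x -> ubound E (x + b) -> 0 <= sup E - x <= b.
Proof.
move=> Ex Eub; rewrite subr_ge0 lerBlDl.
by rewrite (ub_le_sup (ex_intro _ _ Eub) Ex) (ge_sup (ex_intro _ _ Ex) Eub).
Qed.

Lemma cvg_pinfty0_le_inv (R : realType) (g : R -> R) (c : R) :
  (forall x, 0 < x -> 0 <= g x <= c / x) -> g x @[x --> +oo] --> 0.
Proof.
move=> g_bnd; have c_ge0 : 0 <= c.
  by have /andP[g1_ge0] := g_bnd 1 ltr01; rewrite divr1; apply: le_trans.
apply/cvgrPdist_le => eps eps_gt0; exists (c / eps); split; first by rewrite num_real.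
move=> x x_gt; have x_gt0 : 0 < x := le_lt_trans (divr_ge0 c_ge0 (ltW eps_gt0)) x_gt.
have /andP[gx_ge0 gx_le] := g_bnd x x_gt0.
rewrite sub0r normrN ger0_norm //; apply: le_trans gx_le _.
by rewrite ler_pdivrMr // mulrC -ler_pdivrMr // ltW.
Qed.

Theorem theorem7 (R : realType) (K M : nat) (H : 'M[R[i]]_(K, M)) (mu : 'I_K -> R) :
  (K <= M)%N ->
  row_free H ->
  (forall k, 0 <= mu k) ->
  (forall i j : 'I_K, (i <= j)%N -> mu j <= mu i) ->
  \sum_(k < K) mu k = 1 ->
  (C_DPC mu H P - rate mu H (fun k => mu k * P)) @[P --> +oo%R] --> 0%R.
Proof.
(* [K <= M] is implied by [row_free H]. *)
move=> _ H_free mu_ge0 mu_noninc mu_sum1.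
have [r r_dual] := row_free_dual H_free.
apply: (@cvg_pinfty0_le_inv _ _ ((\sum_j complex.Re (sqnorm (r j))) / ln 2)) => P P_gt0.
rewrite mulrAC; apply: sup_sub_le.
  exists (fun k => mu k * P); split=> // [k|]; first exact: mulr_ge0 (mu_ge0 k) (ltW P_gt0).
  by rewrite -mulr_suml mu_sum1 mul1r.
move=> _ [P' [P'_ge0 P'_sum ->]]; rewrite addrC -lerBlDr.
exact: rate_sub_le.
Qed.
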